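(* Consider a one-parameter family of admissible vector fields of a feedforward network, with internal phase space $V$. If $V=\mathbb R$, then no linear admissible map (in particular no linearization at a fully synchronous equilibrium) has a pair of non-real complex conjugate eigenvalues; hence in a one-parameter bifurcation only real eigenvalues can cross the imaginary axis. On the other hand, if $\dim V\ge 2$, there are linear admissible maps with non-real complex conjugate eigenvalues, so that a one-parameter bifurcation in which a pair of complex conjugate eigenvalues crosses the imaginary axis is possible.
   Context: A homogeneous coupled cell network with asymmetric inputs consists of a finite set of cells $C$ and a set $\Sigma=\{\sigma_1,\dots,\sigma_n\}$ of pairwise distinct maps $\sigma\colon C\to C$ with $\sigma_1=\mathrm{Id}_C$; there is an arrow of type $\sigma$ from $q$ to $p$ iff $\sigma(p)=q$. A path from $p$ to $q$ is a set $\{p_1,\dots,p_k\}$ of pairwise distinct cells with $p_1=p$, $p_k=q$ and $\tau_j(p_{j+1})=p_j$ for some $\tau_j\in\Sigma$. A cycle of length $k$ is such a path with additionally $\tau(p_1)=p_k$ for some $\tau\in\Sigma$; the network is feedforward if it has no cycles of length $\ge2$. For a finite-dimensional real vector space $V$ (internal phase space) and $f\colon V^n\times\mathbb R\to V$, the admissible vector fields are $\gamma_f(x,\lambda)_p=f(x_{\sigma_1(p)},\dots,x_{\sigma_n(p)},\lambda)$ on $V^N$; linear admissible maps are $\gamma_{\mathfrak l}$ with $\mathfrak l\colon V^n\to V$ linear. *)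

From HB Require Import structures.
From mathcomp Require Import all_boot all_order all_algebra.
From mathcomp Require Import reals.
From mathcomp Require Import complex.
Set Implicit Arguments. Unset Strict Implicit. Unset Printing Implicit Defensive.
Import Order.TTheory GRing.Theory Num.Theory.
Local Open Scope ring_scope.

(* A homogeneous network with asymmetric inputs: cells C (a finType), and
   Sigma = (sigma_0, ..., sigma_n) given by sigma : 'I_n.+1 -> (C -> C);
   the paper's sigma_1 = Id is our sigma ord0, and "pairwise distinct" is
   injectivity of sigma (stated in the theorem). *)

(* [net_step sigma x y] : there is tau in Sigma with tau y = x
   (the path condition tau_j(p_{j+1}) = p_j for x = p_j, y = p_{j+1}). *)
Definition net_step (C : finType) (n : nat) (sigma : 'I_n.+1 -> C -> C)
  (x y : C) : Prop := exists i : 'I_n.+1, sigma i y = x.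

(* p_1, ..., p_k is encoded as p 0, ..., p (k-1).
   A path of k pairwise distinct cells. *)
Definition net_path (C : finType) (n : nat) (sigma : 'I_n.+1 -> C -> C)
  (k : nat) (p : nat -> C) : Prop :=
  (0 < k)%N /\
  (forall i j, i < k -> j < k -> p i = p j -> i = j)%N /\
  (forall j, (j.+1 < k)%N -> net_step sigma (p j) (p j.+1)).

Definition net_cycle (C : finType) (n : nat) (sigma : 'I_n.+1 -> C -> C)
  (k : nat) (p : nat -> C) : Prop :=
  net_path sigma k p /\ net_step sigma (p k.-1) (p 0%N).

Definition feedforward (C : finType) (n : nat) (sigma : 'I_n.+1 -> C -> C)
  : Prop :=
  forall (k : nat) (p : nat -> C), (2 <= k)%N -> ~ net_cycle sigma k p.

(* Internal phase space V = K^d (row vectors 'rV[K]_d, d = dim V).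
   A linear map l : V^{n+1} -> V is given by matrices L i (acting on row
   vectors):  l(v_0, ..., v_n) = \sum_i v_i *m L i. *)
Definition adm_lin (K : pzRingType) (C : finType) (n d : nat)
  (sigma : 'I_n.+1 -> C -> C) (L : 'I_n.+1 -> 'M[K]_d)
  (x : C -> 'rV[K]_d) (p : C) : 'rV[K]_d :=
  \sum_(i < n.+1) x (sigma i p) *m L i.

(* lam in C = R[i] is an eigenvalue of the real linear map gamma_l on V^C
   (i.e. of its complexification): there is a nonzero complex vector
   z in (C^d)^C with gamma_l z = lam z. *)
Definition adm_eigenvalue (R : realType) (C : finType) (n d : nat)
  (sigma : 'I_n.+1 -> C -> C) (L : 'I_n.+1 -> 'M[R]_d) (lam : R[i]) : Prop :=
  exists z : C -> 'rV[R[i]]_d,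
    (exists p, z p != 0) /\
    forall p, adm_lin sigma (fun i => map_mx (real_complex R) (L i)) z p
              = lam *: z p.

From HB Require Import structures.
From mathcomp Require Import all_boot all_order all_algebra.
From mathcomp Require Import reals.
From mathcomp Require Import complex.
From mathcomp Require Import zify.
Set Implicit Arguments. Unset Strict Implicit. Unset Printing Implicit Defensive.
Import Order.TTheory GRing.Theory Num.Theory.
Local Open Scope ring_scope.

(* Let z be a (complex) eigenvector of gamma_l with
   eigenvalue lam.  In a feedforward network every nonempty set of cells,
   in particular the support of z, contains a cell p none of whose inputs
   sigma_i(p) <> p lies in the set: otherwise, repeatedly choosing such an
   input would walk backwards forever through the finite set and close a
   cycle of length >= 2.  At such a cell only the self-couplings survive:
   (gamma_l z)_p = z_p * (sum of the L_i with sigma_i(p) = p), so lam is an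
   eigenvalue of this real matrix.  For V = R it is a real 1x1 matrix,
   whence lam is real.

   Dimension >= 2.  Letting the identity input act by the rotation
   e_0 |-> e_1, e_1 |-> -e_0 and all other inputs act by 0, every
   synchronous vector (v, ..., v) with v = e_0 - lam e_1, lam = +-i, is an
   eigenvector with eigenvalue lam; this works for every (nonempty) network. *)

Section FeedforwardWalks.

Variables (C : finType) (n : nat) (sigma : 'I_n.+1 -> C -> C).
Hypothesis ff : feedforward sigma.

(* Otherwise the f-orbit closes up into a cycle of
   length >= 2, read backwards. *)
Lemma feedforward_walk_stalls (f : C -> C) (x : C) :
  (forall y, f y != y -> net_step sigma (f y) y) ->
  exists m, f (iter m f x) = iter m f x.
Proof.
move=> step_f; set b := order f x.
have b_gt0 : (0 < b)%N := order_gt0 f x.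
have [fixed | /existsPn no_fixed] :=
  boolP [exists m : 'I_b, f (iter m f x) == iter m f x].
  by have [m /eqP] := existsP fixed; exists m.
have moves m : (m < b)%N -> f (iter m f x) != iter m f x.
  by move=> m_lt_b; apply: (no_fixed (Ordinal m_lt_b)).
(* The orbit loops back, f^b x = f^a x with a < b, while f^0 x, ...,
   f^(b-1) x are pairwise distinct; since f^(b-1) x is not fixed, a < b-1,
   and f^(b-1) x, ..., f^a x is a cycle of length b - a >= 2. *)
have [a a_lt_b loop_ab] := trajectP (looping_order f x).
have iter_inj i j : (i < b)%N -> (j < b)%N -> iter i f x = iter j f x -> i = j.
  by move=> ib jb eq_ij; rewrite -(findex_iter ib) -(findex_iter jb) eq_ij.
have iterSpred : iter b f x = f (iter b.-1 f x) by rewrite -iterS prednK.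
have a_neq : a != b.-1.
  apply: contraNneq (moves b.-1 ltac:(lia)) => a_eq.
  by rewrite -iterSpred loop_ab a_eq.
exfalso; apply: (@ff (b - a)%N (fun j => iter (b.-1 - j) f x)); first lia.
split; [split; [|split]|].
- lia.
- move=> i j ik jk /iter_inj; lia.
- move=> j jk; rewrite (_ : (b.-1 - j = (b.-1 - j.+1).+1)%N); last by lia.
  by apply: step_f; apply: moves; lia.
- rewrite (_ : (b.-1 - (b - a).-1 = a)%N); last by lia.
  by rewrite subn0 -loop_ab iterSpred; apply: step_f; apply: moves; lia.
Qed.

Lemma feedforward_source_free (S : pred C) (p0 : C) :
  p0 \in S ->
  exists2 p, p \in S & forall i, sigma i p != p -> sigma i p \notin S.
Proof.
move=> S_p0.
pose f p := if [pick i | (sigma i p != p) && (sigma i p \in S)] is Some i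
            then sigma i p else p.
have step_f y : f y != y -> net_step sigma (f y) y.
  by rewrite /f; case: pickP => [i _ _|_]; [exists i | rewrite eqxx].
have f_S y : y \in S -> f y \in S.
  by rewrite /f; case: pickP => [i /andP[]|].
have [m fixed] := feedforward_walk_stalls p0 step_f.
exists (iter m f p0); first by elim: m {fixed} => //= m; apply: f_S.
move: fixed; rewrite /f; case: pickP => [i /andP[ne _] eq_i|none _ i ne].
  by rewrite eq_i eqxx in ne.
by apply/negP => S_i; move: (none i); rewrite ne S_i.
Qed.

End FeedforwardWalks.

Definition self_coupling (K : pzRingType) (C : finType) (n d : nat)
  (sigma : 'I_n.+1 -> C -> C) (L : 'I_n.+1 -> 'M[K]_d) (p : C) : 'M[K]_d :=
  \sum_(i < n.+1 | sigma i p == p) L i.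

Lemma adm_lin_source_free (K : pzRingType) (C : finType) (n d : nat)
  (sigma : 'I_n.+1 -> C -> C) (L : 'I_n.+1 -> 'M[K]_d) (x : C -> 'rV[K]_d)
  (p : C) :
  (forall i, sigma i p != p -> x (sigma i p) = 0) ->
  adm_lin sigma L x p = x p *m self_coupling sigma L p.
Proof.
move=> x_out; rewrite /adm_lin /self_coupling mulmx_sumr [in RHS]big_mkcond /=.
apply: eq_bigr => i _; case: eqP => [-> // | /eqP ne].
by rewrite x_out ?mul0mx.
Qed.

Lemma adm_lin_sync (K : pzRingType) (C : finType) (n d : nat)
  (sigma : 'I_n.+1 -> C -> C) (L : 'I_n.+1 -> 'M[K]_d) (v : 'rV[K]_d)
  (p : C) :
  adm_lin sigma L (fun=> v) p = v *m \sum_(i < n.+1) L i.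
Proof. by rewrite /adm_lin mulmx_sumr. Qed.

Lemma adm_eigenvalue_self_coupling (R : realType) (C : finType) (n d : nat)
  (sigma : 'I_n.+1 -> C -> C) (L : 'I_n.+1 -> 'M[R]_d) (lam : R[i]) :
  feedforward sigma -> adm_eigenvalue sigma L lam ->
  exists p (v : 'rV[R[i]]_d), v != 0 /\
    v *m self_coupling sigma (fun i => map_mx (real_complex R) (L i)) p
    = lam *: v.
Proof.
move=> ff [z [[p0 z_p0] eig_z]].
have [p z_p z_out] :=
  feedforward_source_free ff (S := [pred q | z q != 0]) z_p0.
exists p, (z p); split=> //.
rewrite -adm_lin_source_free ?eig_z // => i /z_out.
by rewrite inE negbK => /eqP.
Qed.

Lemma eigenvalue_mx1 (K : idomainType) (M : 'M[K]_1) (v : 'rV[K]_1)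
  (lam : K) :
  v != 0 -> v *m M = lam *: v -> lam = M 0 0.
Proof.
move=> v_nz eig_v.
have v00 : v 0 0 != 0.
  apply: contraNneq v_nz => v0; apply/eqP/rowP => j.
  by rewrite ord1 v0 mxE.
apply: (mulIf v00); move/rowP/(_ 0): eig_v.
by rewrite !mxE big_ord1 mulrC => <-.
Qed.

(* V = R: the eigenvalues of admissible linear maps of a feedforward network
   are real, since they are eigenvalues of real 1x1 self-couplings. *)
Lemma feedforward_scalar_eigenvalue_real (R : realType) (C : finType)
  (n : nat) (sigma : 'I_n.+1 -> C -> C) (L : 'I_n.+1 -> 'M[R]_1)
  (lam : R[i]) :
  feedforward sigma -> adm_eigenvalue sigma L lam -> complex.Im lam = 0.
Proof.
move=> ff /(adm_eigenvalue_self_coupling ff) [p [v [v_nz eig_v]]].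
rewrite (eigenvalue_mx1 v_nz eig_v) /self_coupling summxE.
under eq_bigr do rewrite mxE.
by rewrite -rmorph_sum.
Qed.

(* The rotation e_0 |-> e_1, e_1 |-> -e_0 of the first two coordinates,
   acting on row vectors. *)
Definition rotation_mx (K : pzRingType) (d : nat) : 'M[K]_d.+2 :=
  delta_mx 0 (lift 0 0) - delta_mx (lift 0 0) 0.

Lemma map_rotation_mx (K K' : pzRingType) (f : {rmorphism K -> K'})
  (d : nat) : map_mx f (rotation_mx K d) = rotation_mx K' d.
Proof. by rewrite map_mxB !map_delta_mx. Qed.

Lemma rotation_eigenvector (K : comNzRingType) (d : nat) (lam : K) :
  lam * lam = -1 ->
  let v : 'rV[K]_d.+2 := delta_mx 0 0 - lam *: delta_mx 0 (lift 0 0) in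
  v != 0 /\ v *m rotation_mx K d = lam *: v.
Proof.
move=> sqr_lam v; split.
  apply/eqP => /rowP /(_ 0); rewrite !mxE /= mulr0 subr0.
  by move/eqP; rewrite oner_eq0.
rewrite /v /rotation_mx mulmxBr !mulmxBl -!scalemxAl !mul_delta_mx_cond /=.
rewrite !mulr1n !mulr0n !scaler0 subr0 sub0r opprK scalerBr scalerA.
by rewrite sqr_lam scaleN1r opprK addrC.
Qed.

Lemma sync_rotation_eigenvalue (R : realType) (C : finType) (n d : nat)
  (sigma : 'I_n.+1 -> C -> C) (lam : R[i]) :
  (0 < #|C|)%N -> lam * lam = -1 ->
  adm_eigenvalue sigma
    (fun i => if i == ord0 then rotation_mx R d else 0) lam.
Proof.
move=> /card_gt0P [c0 _] sqr_lam.
have [v_nz eig_v] := rotation_eigenvector d sqr_lam.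
exists (fun=> delta_mx 0 0 - lam *: delta_mx 0 (lift 0 0)).
split; first by exists c0.
move=> p; rewrite adm_lin_sync big_ord_recl big1 ?addr0 => [|i _].
  by rewrite eqxx map_rotation_mx.
by rewrite map_mx0.
Qed.

Lemma imaginary_unitP (R : rcfType) : ('i%C : R[i]) * 'i%C = -1.
Proof. by rewrite -expr2 sqr_i. Qed.

Lemma planar_conjugate_eigenvalues (R : realType) (C : finType) (n d : nat)
  (sigma : 'I_n.+1 -> C -> C) :
  (0 < #|C|)%N -> (2 <= d)%N ->
  exists (L : 'I_n.+1 -> 'M[R]_d) (lam : R[i]),
    complex.Im lam != 0 /\ adm_eigenvalue sigma L lam /\
    adm_eigenvalue sigma L (conjc lam).
Proof.
case: d => [|[|d]] // C_gt0 _.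
have conj_i : conjc ('i%C : R[i]) = - 'i%C.
  by apply/eqP; rewrite eq_complex /= oppr0 !eqxx.
exists (fun i => if i == ord0 then rotation_mx R d else 0), 'i%C.
split; first by rewrite /= oner_eq0.
by split; apply: sync_rotation_eigenvalue; rewrite // ?conj_i ?mulrNN imaginary_unitP.
Qed.

Theorem theorem3p10 (R : realType) (C : finType) (n : nat)
  (sigma : 'I_n.+1 -> C -> C) :
  (0 < #|C|)%N ->
  sigma ord0 = id ->
  injective sigma ->
  feedforward sigma ->
  (* V = R (d = 1): no linear admissible map has a non-real eigenvalue *)
  (forall (L : 'I_n.+1 -> 'M[R]_1) (lam : R[i]),
      adm_eigenvalue sigma L lam -> complex.Im lam = 0) /\
  (* dim V >= 2: some linear admissible map has a pair of non-real
     complex conjugate eigenvalues *)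
  (forall d : nat, (2 <= d)%N ->
     exists (L : 'I_n.+1 -> 'M[R]_d) (lam : R[i]),
       complex.Im lam != 0 /\ adm_eigenvalue sigma L lam /\
       adm_eigenvalue sigma L (conjc lam)).
Proof.
move=> C_gt0 _ _ ff; split=> [L lam | d d_ge2].
  exact: feedforward_scalar_eigenvalue_real.
exact: planar_conjugate_eigenvalues.
Qed.
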